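(* Let $\lambda>1$, $E\in\mathbb{R}$, $v:\mathbb{T}\to\mathbb{R}$, $\omega\in\mathbb{R}$ and $\theta_0\in\mathbb{T}$. Let $s_0<r_0$ be such that the fibre orbits $r_{k+1}=\lambda^2v(\theta_k)-E-1/r_k$, $s_{k+1}=\lambda^2v(\theta_k)-E-1/s_k$ (with $\theta_k=\theta_0+k\omega$) satisfy $r_k,s_k\in B$ for all $k\ge0$. If $r_0-s_0\ge\lambda^{-7}$, then for every integer $t>0$, $$\frac{|\{0\le j<t:r_j\in B^s\}|}{t}\le\frac23+\frac{3}{2t}.$$
   Context: $B=[\lambda^{-2},\lambda^2]$, $B^s=[\lambda^{-2},\lambda^{-1}]$. *)

From Stdlib Require Import Reals Lra List.
Open Scope R_scope.

Definition inB (lam x : R) : Prop := / (lam ^ 2) <= x <= lam ^ 2.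

Definition inBs (lam x : R) : Prop := / (lam ^ 2) <= x <= / lam.

Definition inBs_dec (lam x : R) : bool :=
  if Rle_dec (/ (lam ^ 2)) x then
    if Rle_dec x (/ lam) then true else false
  else false.

Definition countBs (lam : R) (r : nat -> R) (t : nat) : nat :=
  length (filter (fun j => inBs_dec lam (r j)) (seq 0 t)).

Definition fibre_orbit (lam E : R) (v : R -> R) (omega theta0 : R) (x : nat -> R) : Prop :=
  forall k : nat, x (S k) = lam ^ 2 * v (theta0 + INR k * omega) - E - / x k.

From Stdlib Require Import Reals Lra Lia List.
Open Scope R_scope.

(* The gap d_k = r_k - s_k of two fibre orbits evolves by d_{k+1} = d_k / (r_k s_k).
   While r_k lies in B^s we have r_k s_k <= lam^-2, so the gap grows by lam^2; at any
   other time r_k, s_k in B only gives r_k s_k <= lam^4, so it shrinks by at most lam^4.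
   With n visits to B^s before time t this yields
   lam^-7 lam^(2n) lam^(-4(t-n)) <= d_t < lam^2, i.e. 6n < 4t + 9. *)

Lemma length_filter_seq_S (b : nat -> bool) (t : nat) :
  length (filter b (seq 0 (S t))) =
  (length (filter b (seq 0 t)) + if b t then 1 else 0)%nat.
Proof.
  rewrite seq_S, filter_app, length_app; simpl.
  destruct (b t); reflexivity.
Qed.

Lemma length_filter_seq_le (b : nat -> bool) (t : nat) :
  (length (filter b (seq 0 t)) <= t)%nat.
Proof.
  rewrite <- (length_seq t 0) at 2. apply filter_length_le.
Qed.

Lemma pow_count_le (a c : R) (b : nat -> bool) (d : nat -> R) :
  0 <= a -> 0 <= c ->
  (forall k, b k = true -> a * d k <= d (S k)) ->
  (forall k, b k = false -> d k <= c * d (S k)) ->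
  forall t, a ^ length (filter b (seq 0 t)) * d 0%nat <=
            c ^ (t - length (filter b (seq 0 t))) * d t.
Proof.
  intros Ha Hc Hgood Hbad t.
  induction t as [|t IH]; [simpl; lra|].
  rewrite length_filter_seq_S.
  pose proof (length_filter_seq_le b t) as Hle.
  set (n := length (filter b (seq 0 t))) in *.
  assert (Hcn : 0 <= c ^ (t - n)) by (apply pow_le; exact Hc).
  destruct (b t) eqn:Hb.
  - replace (S t - (n + 1))%nat with (t - n)%nat by lia.
    rewrite pow_add, pow_1.
    apply Rle_trans with (c ^ (t - n) * (a * d t)).
    + replace (a ^ n * a * d 0%nat) with (a * (a ^ n * d 0%nat)) by ring.
      replace (c ^ (t - n) * (a * d t)) with (a * (c ^ (t - n) * d t)) by ring.
      apply Rmult_le_compat_l; assumption.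
    + apply Rmult_le_compat_l; [exact Hcn | exact (Hgood t Hb)].
  - replace (S t - (n + 0))%nat with (S (t - n)) by lia.
    rewrite Nat.add_0_r, <- tech_pow_Rmult.
    apply Rle_trans with (c ^ (t - n) * d t); [exact IH|].
    replace (c * c ^ (t - n) * d (S t)) with (c ^ (t - n) * (c * d (S t))) by ring.
    apply Rmult_le_compat_l; [exact Hcn | exact (Hbad t Hb)].
Qed.

Lemma le_div_of_mul_le_1 (a d m : R) :
  0 <= d -> 0 < m -> m * a <= 1 -> a * d <= d / m.
Proof.
  intros Hd Hm Hma.
  apply (Rmult_le_reg_r m); [exact Hm|].
  replace (d / m * m) with d by (field; lra). nra.
Qed.

Lemma le_mul_div (c d m : R) : 0 <= d -> 0 < m -> m <= c -> d <= c * (d / m).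
Proof.
  intros Hd Hm Hmc.
  assert (Hq : 0 <= d / m)
    by (apply Rmult_le_pos; [exact Hd | left; apply Rinv_0_lt_compat, Hm]).
  replace d with (m * (d / m)) at 1 by (field; lra).
  apply Rmult_le_compat_r; assumption.
Qed.

Lemma Rpow_lt_exponent (x : R) (m n : nat) : 1 < x -> x ^ m < x ^ n -> (m < n)%nat.
Proof.
  intros Hx Hlt.
  destruct (Nat.lt_ge_cases m n) as [H|H]; [exact H|].
  pose proof (Rle_pow x n m ltac:(lra) H). lra.
Qed.

Lemma inB_pos (lam x : R) : 0 < lam -> inB lam x -> 0 < x.
Proof.
  intros Hlam [Hx _].
  assert (0 < / lam ^ 2) by (apply Rinv_0_lt_compat, pow_lt; exact Hlam). lra.
Qed.

Lemma inBs_dec_true (lam x : R) : inBs_dec lam x = true -> inBs lam x.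
Proof.
  unfold inBs_dec, inBs.
  destruct (Rle_dec (/ lam ^ 2) x), (Rle_dec x (/ lam)); easy.
Qed.

Lemma fibre_orbit_diff_succ (lam E : R) (v : R -> R) (omega theta0 : R) (x y : nat -> R) :
  fibre_orbit lam E v omega theta0 x -> fibre_orbit lam E v omega theta0 y ->
  forall k, x k <> 0 -> y k <> 0 ->
  x (S k) - y (S k) = (x k - y k) / (x k * y k).
Proof.
  intros Hx Hy k Hxk Hyk. rewrite Hx, Hy. field. split; assumption.
Qed.

Lemma fibre_orbits_ordered (lam E : R) (v : R -> R) (omega theta0 : R) (r s : nat -> R) :
  0 < lam ->
  fibre_orbit lam E v omega theta0 r -> fibre_orbit lam E v omega theta0 s ->
  (forall k, inB lam (r k)) -> (forall k, inB lam (s k)) ->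
  s 0%nat < r 0%nat -> forall k, s k < r k.
Proof.
  intros Hlam Hr Hs HrB HsB H0 k.
  induction k as [|k IH]; [exact H0|].
  pose proof (inB_pos lam (r k) Hlam (HrB k)).
  pose proof (inB_pos lam (s k) Hlam (HsB k)).
  apply Rlt_0_minus.
  rewrite (fibre_orbit_diff_succ lam E v omega theta0 r s Hr Hs k) by (intro; lra).
  apply Rdiv_lt_0_compat; nra.
Qed.

Lemma mul_le_inv_sqr (lam x y : R) : 0 < lam -> 0 < y -> y <= x -> x <= / lam ->
  x * y * lam ^ 2 <= 1.
Proof.
  intros Hlam Hy Hyx Hx.
  assert (Hxlam : x * lam <= 1).
  { apply (Rmult_le_compat_r lam) in Hx; [|lra]. rewrite Rinv_l in Hx by lra. exact Hx. }
  assert (Hylam : y * lam <= 1) by nra.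
  assert (Hylam0 : 0 < y * lam) by nra.
  assert (Hxlam0 : 0 < x * lam) by nra.
  replace (x * y * lam ^ 2) with ((x * lam) * (y * lam)) by ring.
  replace 1 with (1 * 1) by ring.
  apply Rmult_le_compat; lra.
Qed.

Lemma inB_mul_le (lam x y : R) : 0 < lam -> inB lam x -> inB lam y -> x * y <= lam ^ 4.
Proof.
  intros Hlam Hx Hy.
  pose proof (inB_pos lam x Hlam Hx). pose proof (inB_pos lam y Hlam Hy).
  destruct Hx as [_ Hx], Hy as [_ Hy].
  replace (lam ^ 4) with (lam ^ 2 * lam ^ 2) by ring.
  apply Rmult_le_compat; lra.
Qed.

Lemma exponent_bound_of_gap (lam g D : R) (n m : nat) : 1 < lam ->
  / lam ^ 7 <= g -> D < lam ^ 2 -> (lam ^ 2) ^ n * g <= (lam ^ 4) ^ m * D ->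
  (2 * n < 9 + 4 * m)%nat.
Proof.
  intros Hlam Hg HD Hgrowth.
  assert (H7 : 0 < lam ^ 7) by (apply pow_lt; lra).
  assert (Hn : 0 < (lam ^ 2) ^ n) by (apply pow_lt, pow_lt; lra).
  assert (Hm : 0 < (lam ^ 4) ^ m) by (apply pow_lt, pow_lt; lra).
  apply (Rpow_lt_exponent lam); [exact Hlam|].
  rewrite pow_add, !pow_mult.
  replace (lam ^ 9) with (lam ^ 7 * lam ^ 2) by ring.
  assert (Hg' : 1 <= lam ^ 7 * g).
  { apply (Rmult_le_compat_l (lam ^ 7)) in Hg; [|lra].
    rewrite Rinv_r in Hg by lra. exact Hg. }
  apply Rle_lt_trans with (lam ^ 7 * ((lam ^ 2) ^ n * g)); [nra|].
  apply Rle_lt_trans with (lam ^ 7 * ((lam ^ 4) ^ m * D)).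
  - apply Rmult_le_compat_l; lra.
  - replace (lam ^ 7 * lam ^ 2 * (lam ^ 4) ^ m)
      with (lam ^ 7 * ((lam ^ 4) ^ m * lam ^ 2)) by ring.
    apply Rmult_lt_compat_l; [exact H7|]. apply Rmult_lt_compat_l; assumption.
Qed.

Lemma ratio_le_of_count_bound (n t : nat) : (0 < t)%nat -> (2 * n < 9 + 4 * (t - n))%nat ->
  (n <= t)%nat -> INR n / INR t <= 2 / 3 + 3 / (2 * INR t).
Proof.
  intros Ht Hbound Hle.
  assert (H6 : (6 * n <= 8 + 4 * t)%nat) by lia.
  apply le_INR in H6. rewrite mult_INR, plus_INR, mult_INR in H6. simpl INR in H6.
  assert (Ht' : 0 < INR t) by (apply lt_0_INR; exact Ht).
  apply (Rmult_le_reg_r (6 * INR t)); [lra|].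
  field_simplify; lra.
Qed.

Theorem lemmaB5 (lam E : R) (v : R -> R) (omega theta0 : R) (r s : nat -> R)
  (Hlam : 1 < lam)
  (Hv_per : forall x : R, v (x + 1) = v x)
  (Hr : fibre_orbit lam E v omega theta0 r)
  (Hs : fibre_orbit lam E v omega theta0 s)
  (HrB : forall k : nat, inB lam (r k))
  (HsB : forall k : nat, inB lam (s k))
  (Hsr : s 0%nat < r 0%nat)
  (Hgap : r 0%nat - s 0%nat >= / (lam ^ 7)) :
  forall t : nat, (0 < t)%nat ->
    INR (countBs lam r t) / INR t <= 2 / 3 + 3 / (2 * INR t).
Proof.
  intros t Ht.
  assert (Hlam0 : 0 < lam) by lra.
  pose proof (fibre_orbits_ordered lam E v omega theta0 r s Hlam0 Hr Hs HrB HsB Hsr) as Hord.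
  assert (Hpos : forall k, 0 < r k /\ 0 < s k)
    by (intro k; split; apply (inB_pos lam); auto).
  assert (Hdiff : forall k, r (S k) - s (S k) = (r k - s k) / (r k * s k)).
  { intro k. destruct (Hpos k).
    apply (fibre_orbit_diff_succ lam E v omega theta0 r s Hr Hs); intro; lra. }
  set (inBs_r := fun j => inBs_dec lam (r j)).
  pose proof (length_filter_seq_le inBs_r t) as Hle.
  assert (Hgrowth := pow_count_le (lam ^ 2) (lam ^ 4) inBs_r (fun k => r k - s k)).
  unfold countBs. apply ratio_le_of_count_bound; [exact Ht | | exact Hle].
  apply (exponent_bound_of_gap lam (r 0%nat - s 0%nat) (r t - s t)); [exact Hlam | lra | |].
  - destruct (HrB t), (Hpos t). lra.
  - apply Hgrowth; [apply pow_le; lra | apply pow_le; lra | |];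
      intros k Hk; rewrite Hdiff; destruct (Hpos k); pose proof (Hord k).
    + apply le_div_of_mul_le_1; [lra | nra |].
      apply (mul_le_inv_sqr lam); try lra. exact (proj2 (inBs_dec_true lam (r k) Hk)).
    + apply le_mul_div; [lra | nra | apply inB_mul_le; auto].
Qed.
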